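(* In any execution of the PermitBFT protocol, if a block is committed, then it is promised.
   Context: PermitBFT setting: $n$ nodes $v_0,\dots,v_{n-1}$, exactly $f<n/3$ byzantine (cannot forge honest signatures), the rest honest. A position is a finite set of blocks. A permit is a signed tuple $(r,p)$ with round $r$ and position $p$. A proof for $(r,p)$ is a set of $2f+1$ permits for $(r,p)$ from distinct nodes. A block is a tuple (proof, transactions) signed by the creator $v_{r\bmod n}$ of the proof's round $r$; its parents are the blocks of the proof's position $p$ (so a block can only be created from $2f+1$ permits of one round for one position). A block is committed if it has at least one child block. A block $b$ is promised (by the latest round) if in some round up to and including the latest round, at least $f+1$ honest nodes issued a permit for one and the same position containing $b$. *)

From Stdlib Require List.
From mathcomp Require Import all_boot.
Set Implicit Arguments. Unset Strict Implicit. Unset Printing Implicit Defensive.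

Section PermitBFT.
Variables (n : nat) (Tx : Type).

(* A block: (round r and position p of its proof), the proof itself (a list
   of permits), its creator (signer) and its transactions.
   A permit: a signed tuple (r, p), recorded with its signer.
   A position is a finite set of blocks, represented as a list. *)
Inductive block : Type :=
  Block (r : nat) (p : seq block) (proof : seq permit)
        (creator : 'I_n) (txs : seq Tx)
with permit : Type :=
  Permit (signer : 'I_n) (pr : nat) (ppos : seq block).

Definition block_round (b : block) : nat := let: Block r _ _ _ _ := b in r.
Definition parents (b : block) : seq block := let: Block _ p _ _ _ := b in p.
Definition block_proof (b : block) : seq permit :=
  let: Block _ _ pf _ _ := b in pf.
Definition block_creator (b : block) : 'I_n :=
  let: Block _ _ _ c _ := b in c.
Definition permit_signer (q : permit) : 'I_n := let: Permit v _ _ := q in v.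
Definition permit_round (q : permit) : nat := let: Permit _ r _ := q in r.
Definition permit_pos (q : permit) : seq block := let: Permit _ _ p := q in p.

Definition is_proof (f : nat) (r : nat) (p : seq block) (pf : seq permit) :=
  size pf = 2 * f + 1 /\
  (forall q, List.In q pf -> permit_round q = r /\ permit_pos q = p) /\
  uniq (map permit_signer pf).

Definition valid_block (f : nat) (b : block) :=
  is_proof f (block_round b) (parents b) (block_proof b) /\
  nat_of_ord (block_creator b) = block_round b %% n.

(* An execution, w.r.t. the set [byz] of byzantine nodes:
   - [latest]: the latest round reached;
   - [issued v r p]: honest node v issued a permit for (r,p) (in round r);
   - [created b]: block b was created in the execution.
   Honest nodes only issue permits in rounds that happened, every created block
   is well-formed, and byzantine nodes cannot forge honest signatures: every
   permit signed by an honest node that appears in a created block was issued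
   by that node. *)
Record execution (f : nat) (byz : {set 'I_n}) := Execution {
  latest : nat;
  issued : 'I_n -> nat -> seq block -> Prop;
  created : block -> Prop;
  issued_le_latest : forall v r p, issued v r p -> r <= latest;
  created_valid : forall b, created b -> valid_block f b;
  unforgeable : forall b, created b -> forall q, List.In q (block_proof b) ->
     permit_signer q \notin byz ->
     issued (permit_signer q) (permit_round q) (permit_pos q)
}.

Definition committed f byz (E : execution f byz) (b : block) :=
  exists c, created E c /\ List.In b (parents c).

Definition promised f byz (E : execution f byz) (b : block) :=
  exists r p (S : {set 'I_n}),
    r <= latest E /\ List.In b p /\ f + 1 <= #|S| /\
    (forall v, v \in S -> v \notin byz /\ issued E v r p).

End PermitBFT.

(** The 2f+1 permits in the proof of a child of b come from distinct nodes, at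
    most f of which are byzantine; the remaining f+1 honest signers really issued
    their permits (signatures cannot be forged), all for one round and for the
    child's position, which contains b. *)

From mathcomp Require Import all_boot.
From mathcomp Require Import zify.

Set Implicit Arguments.
Unset Strict Implicit.
Unset Printing Implicit Defensive.

Lemma mem_map_In (A : Type) (B : eqType) (g : A -> B) (s : seq A) (y : B) :
  y \in map g s -> exists2 x, List.In x s & g x = y.
Proof.
elim: s => [//|x s IHs] /=; rewrite in_cons => /orP[/eqP ->|/IHs[x' sx' <-]].
- by exists x; [left|].
- by exists x'; [right|].
Qed.

Lemma cardsD_ge (T : finType) (A B : {set T}) : #|A| - #|B| <= #|A :\: B|.
Proof.
rewrite cardsD leq_sub2l //.
exact/subset_leq_card/subsetIr.
Qed.

Section Signers.
Variables (n : nat) (Tx : Type).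

Definition signers (pf : seq (permit n Tx)) : {set 'I_n} :=
  [set v in map (@permit_signer n Tx) pf].

Lemma card_signers (pf : seq (permit n Tx)) :
  uniq (map (@permit_signer n Tx) pf) -> #|signers pf| = size pf.
Proof. by move=> uniq_pf; rewrite cardsE (card_uniqP uniq_pf) size_map. Qed.

Lemma card_proof_signers f r p pf :
  is_proof f r p pf -> #|signers pf| = 2 * f + 1.
Proof. by case=> size_pf [_ uniq_pf]; rewrite card_signers. Qed.

Variables (f : nat) (byz : {set 'I_n}) (E : execution Tx f byz).

Lemma honest_signers_issued (c : block n Tx) v :
  created E c -> v \in signers (block_proof c) -> v \notin byz ->
  issued E v (block_round c) (parents c).
Proof.
move=> created_c; rewrite inE => /mem_map_In[q q_pf <-] honest_q.
have [[_ [pf_for _]] _] := created_valid created_c.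
have [<- <-] := pf_for q q_pf.
exact: unforgeable created_c q q_pf honest_q.
Qed.

Lemma card_honest_signers (c : block n Tx) :
  #|byz| = f -> created E c -> f + 1 <= #|signers (block_proof c) :\: byz|.
Proof.
move=> card_byz created_c; have [proof_c _] := created_valid created_c.
have := cardsD_ge (signers (block_proof c)) byz.
by rewrite (card_proof_signers proof_c) card_byz; lia.
Qed.

End Signers.

Theorem lemma1 (n f : nat) (Tx : Type) (byz : {set 'I_n})
  (Hf : 3 * f < n) (Hbyz : #|byz| = f)
  (E : execution Tx f byz) (b : block n Tx) :
  committed E b -> promised E b.
Proof.
move=> [c [created_c b_parent]].
set S := signers (block_proof c) :\: byz.
have card_S : f + 1 <= #|S| := card_honest_signers Hbyz created_c.
have S_honest_issued u :
    u \in S -> u \notin byz /\ issued E u (block_round c) (parents c).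
  by case/setDP=> signer_u honest_u; split; last exact: honest_signers_issued.
have [v /S_honest_issued[_ issued_v]] : exists v, v \in S.
  by apply/set0Pn; rewrite -card_gt0; lia.
exists (block_round c), (parents c), S.
by split; [exact: issued_le_latest issued_v | split].
Qed.
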